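(* Let $X$ be a real random variable with cumulative distribution function $F$, $\bar F=1-F$, and assume there exists $\epsilon>0$ with $\mathbb{E}[e^{(1+\epsilon)X}]<\infty$. Let $c(k)=\int_k^\infty(e^x-e^k)\,dF(x)$. If $-\log\bar F\in R_\alpha$ for some $\alpha\ge1$, then $-\log c\in R_\alpha$ and, as $k\to\infty$, $$-\log c(k)\sim -k-\log\bar F(k).$$
   Context: A measurable function $g$, positive for large $x$, is in $R_\alpha$ (regularly varying at $+\infty$ with index $\alpha$) if $\lim_{x\to\infty}g(\lambda x)/g(x)=\lambda^\alpha$ for every $\lambda>0$. $g\sim h$ means $g(k)/h(k)\to1$ as $k\to\infty$. *)

From HB Require Import structures.
From mathcomp Require Import all_boot all_order all_algebra.
From mathcomp Require Import all_classical all_reals all_analysis.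
Set Implicit Arguments. Unset Strict Implicit. Unset Printing Implicit Defensive.
Import Order.TTheory GRing.Theory Num.Theory.
Import numFieldNormedType.Exports.
Local Open Scope classical_set_scope.
Local Open Scope ring_scope.

Definition regularly_varying (R : realType) (alpha : R) (g : R -> R) : Prop :=
  measurable_fun setT g /\
  (\forall x \near +oo, 0 < g x) /\
  (forall lam : R, 0 < lam ->
     (fun x => g (lam * x) / g x) @ +oo --> (lam `^ alpha : R)).

Definition asym_equiv (R : realType) (g h : R -> R) : Prop :=
  (fun k => g k / h k) @ +oo --> (1 : R).

Definition law_cdf (R : realType) (mu : probability R R) (x : R) : R :=
  fine (mu [set` `]-oo, x]]).

Definition call_price (R : realType) (mu : probability R R) (k : R) : R :=
  fine (\int[mu]_(x in [set` `]k, +oo[]) (expR x - expR k)%:E)%E.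

(* Write g = - ln F̄ and h k = g k - k.  Markov's inequality for the exponential
   moment gives g x >= (1 + eps) x - C, so h grows linearly and g <= K h eventually.
   Restricting the integral to ]lam k, +oo[ gives c k >= (e^(lam k) - e^k) e^(- g (lam k)),
   hence - ln c <= (1 + eta) h for lam^alpha close to 1.  Conversely, bounding e^x by
   its value at the right end of the cells ]k (1 + i d), k (1 + (i + 1) d)], i < n, and
   by the exponential moment beyond the last cell gives c k <= (n + 1 + M) e^(-(1 - eta) h k).
   Thus - ln c ~ h.  Finally h is regularly varying of index alpha because
     h (lam k) / h k - lam^alpha
       = g k / h k * ((g (lam k) / g k - lam^alpha) + k / g k * (lam^alpha - lam)),
   where g / h is bounded and k / g k -> 0 when alpha > 1 (g (2 x) >= 2 g x / q with
   q < 1), and regular variation passes to asymptotically equivalent functions. *)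

From HB Require Import structures.
From mathcomp Require Import all_boot all_order all_algebra.
From mathcomp Require Import all_classical all_reals all_analysis.
From mathcomp Require Import ring lra measurable_realfun.
Set Implicit Arguments. Unset Strict Implicit.
Import Order.TTheory GRing.Theory Num.Theory.
Import numFieldNormedType.Exports.
Local Open Scope classical_set_scope.
Local Open Scope ring_scope.

Section Asymptotics.
Context {R : realType}.
Implicit Types (f h : R -> R) (lam : R).

Lemma scale_cvgy lam : 0 < lam -> (fun x => lam * x) @ +oo --> +oo.
Proof.
move=> lam0; apply/cvgryPge => A; near=> x.
rewrite -ler_pdivrMl //; near: x; exact: nbhs_pinfty_ge (num_real _).
Unshelve. all: by end_near. Qed.

Lemma asym_equiv_quotient_gt0 f h : asym_equiv f h ->
  \forall x \near +oo, 0 < f x / h x.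
Proof. by move=> fh; exact: cvgr_gt _ fh _ ltr01. Qed.

Lemma asym_equiv_gt0 f h : asym_equiv f h ->
  (\forall x \near +oo, 0 < h x) -> \forall x \near +oo, 0 < f x.
Proof.
move=> /asym_equiv_quotient_gt0 fh hpos; near=> x.
have -> : f x = f x / h x * h x by rewrite divfK // gt_eqF //; near: x.
by rewrite mulr_gt0 //; near: x.
Unshelve. all: by end_near. Qed.

Lemma asym_equiv_ratio_cvg f h lam (l : R) : 0 < lam -> asym_equiv f h ->
  (fun x => h (lam * x) / h x) @ +oo --> l ->
  (fun x => f (lam * x) / f x) @ +oo --> l.
Proof.
move=> lam0 fh hl.
have fh_lam : (fun x => f (lam * x) / h (lam * x)) @ +oo --> (1 : R).
  exact: cvg_comp _ _ (scale_cvgy lam0) fh.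
have lim : (fun x => f (lam * x) / h (lam * x) * (h (lam * x) / h x)
    * (f x / h x)^-1) @ +oo --> 1 * l * 1^-1.
  exact: cvgM (cvgM fh_lam hl) (cvgV (oner_neq0 R) fh).
rewrite mul1r invr1 mulr1 in lim; apply: cvg_trans lim; apply: near_eq_cvg.
have pos := asym_equiv_quotient_gt0 fh.
have pos_lam : \forall x \near +oo, 0 < f (lam * x) / h (lam * x).
  exact: cvgr_gt _ fh_lam _ ltr01.
near=> x.
have : f x / h x != 0 by rewrite gt_eqF //; near: x; exact: pos.
have : f (lam * x) / h (lam * x) != 0 by rewrite gt_eqF //; near: x; exact: pos_lam.
rewrite !mulf_eq0 !negb_or !invr_eq0 => /andP[? ?] /andP[? ?].
by field; apply/and3P.
Unshelve. all: by end_near. Qed.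

Lemma regularly_varying_asym_equiv (alpha : R) f h :
  measurable_fun setT f -> asym_equiv f h -> regularly_varying alpha h ->
  regularly_varying alpha f.
Proof.
move=> mf fh [_ [hpos hrv]]; split => //; split.
  exact: asym_equiv_gt0 hpos.
by move=> lam lam0; exact: asym_equiv_ratio_cvg (hrv _ lam0).
Qed.

Lemma bounded_mul_cvg0 f h (M : R) : (\forall x \near +oo, `|h x| <= M) ->
  f @ +oo --> 0 -> (fun x => h x * f x) @ +oo --> 0.
Proof.
move=> hM /cvgr0Pnorm_le f0; apply/cvgr0Pnorm_le => e e0.
have M1 : 0 < `|M| + 1 by rewrite ltr_wpDl.
near=> x; rewrite normrM -(divfK (lt0r_neq0 M1) e) mulrC.
apply: ler_pM => //; first by near: x; apply: f0; rewrite divr_gt0.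
have hxM : `|h x| <= M by near: x; exact: hM.
by apply: le_trans hxM _; apply: le_trans (ler_norm M) _; rewrite lerDl.
Unshelve. all: by end_near. Qed.

Lemma doubling_contraction_cvg0 (r : R -> R) (q : R) : 0 <= q < 1 ->
  (\forall x \near +oo, 0 <= r x <= 1 /\ r (2 * x) <= q * r x) ->
  r @ +oo --> 0.
Proof.
move=> /andP[q0 q1] [K [_ rK]].
pose K' := Num.max K 1.
have K'0 : 0 < K' by rewrite lt_max ltr01 orbT.
have rK' x : K' < x -> 0 <= r x <= 1 /\ r (2 * x) <= q * r x.
  by move=> Kx; apply: rK; apply: le_lt_trans Kx; rewrite le_max lexx.
have K'_le m : K' <= 2 ^+ m * K'.
  by apply: ler_peMl (ltW K'0) _; rewrite exprn_ege1 // ler1n.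
have r_geo m x : 2 ^+ m * K' < x -> r x <= q ^+ m.
  elim: m x => [|m IH] x; first by rewrite expr0 mul1r => /rK' [/andP[_ ->]].
  move=> Kx; have y_gt : 2 ^+ m * K' < x / 2.
    by rewrite ltr_pdivlMr // mulrAC -exprSr.
  have [_ contr] := rK' _ (le_lt_trans (K'_le m) y_gt); move: contr.
  rewrite mulrC divfK ?pnatr_eq0 // exprS => contr.
  by apply: le_trans contr _; rewrite ler_wpM2l // IH.
apply/cvgr0Pnorm_le => e e0.
have [m qm] : exists m, q ^+ m <= e.
  have := @cvg_geometric R 1 q; rewrite ger0_norm // => /(_ q1).
  move=> /cvgr0Pnorm_le /(_ e e0) [N _ /(_ N (leqnn N))].
  by rewrite /= mul1r ger0_norm ?exprn_ge0 //; exists N.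
near=> x.
have Kx : 2 ^+ m * K' < x by near: x; exact: nbhs_pinfty_gt (num_real _).
have [/andP[rx0 _] _] := rK' _ (le_lt_trans (K'_le m) Kx).
by rewrite ger0_norm //; apply: le_trans qm; exact: r_geo.
Unshelve. all: by end_near. Qed.

End Asymptotics.

Section ExponentialTail.
(* [g] stands for - ln F̄ and [g x - x], called the excess, for - x - ln F̄ x. *)
Context {R : realType} {g : R -> R} {eps C : R}.
Hypotheses (eps0 : 0 < eps) (g_ge : forall x, (1 + eps) * x - C <= g x).

Lemma excess_ge_near (A : R) : \forall x \near +oo, A <= g x - x.
Proof.
near=> x; have := g_ge x.
have : (A + C) / eps <= x by near: x; exact: nbhs_pinfty_ge (num_real _).
rewrite ler_pdivrMr // => ? ?; lra.
Unshelve. all: by end_near. Qed.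

Lemma tail_ge_near (A : R) : \forall x \near +oo, A <= g x.
Proof.
near=> x.
have : A <= g x - x by near: x; exact: excess_ge_near.
have : 0 <= x by near: x; exact: nbhs_pinfty_ge (num_real _).
lra.
Unshelve. all: by end_near. Qed.

Lemma tail_le_excess :
  exists2 K : R, 1 <= K & \forall x \near +oo, g x <= K * (g x - x).
Proof.
exists (2 * (1 + eps) / eps); first by rewrite ler_pdivlMr // mul1r; have := eps0; lra.
near=> x; rewrite mulrAC ler_pdivlMr //; have := g_ge x.
have : C / (1 + eps) <= g x - x by near: x; exact: excess_ge_near.
rewrite ler_pdivrMr ?addr_gt0 // => ? ?; lra.
Unshelve. all: by end_near. Qed.

Context {alpha : R}.
Hypotheses (alpha1 : 1 <= alpha)
  (g_rv : forall lam : R, 0 < lam -> (fun x => g (lam * x) / g x) @ +oo --> lam `^ alpha).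

Lemma tail_ratio_near (lam delta : R) : 0 < lam -> 0 < delta ->
  \forall x \near +oo,
    (lam `^ alpha - delta) * g x <= g (lam * x) <= (lam `^ alpha + delta) * g x.
Proof.
move=> lam0 delta0; have := g_rv lam0 => /cvgrPdist_le /(_ delta delta0) ratio.
near=> x.
have gx0 : 0 < g x by apply: lt_le_trans ltr01 _; near: x; exact: tail_ge_near.
have : `|lam `^ alpha - g (lam * x) / g x| <= delta by near: x; exact: ratio.
rewrite ler_norml => /andP[lo hi].
by apply/andP; split; [rewrite -ler_pdivlMr | rewrite -ler_pdivrMr] => //; lra.
Unshelve. all: by end_near. Qed.

Lemma id_div_tail_cvg0 : 1 < alpha -> (fun x => x / g x) @ +oo --> 0.
Proof.
move=> alpha_gt1; pose w := 2 `^ alpha.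
have w_gt2 : 2 < w.
  rewrite /w /powR gt_eqF // -[X in X < _](@lnK _ 2) ?posrE //.
  by rewrite ltr_expR ltr_pMl // ln_gt0 // ltr1n.
have w2 : 0 < w + 2 by rewrite addr_gt0 // (lt_trans _ w_gt2).
apply: (@doubling_contraction_cvg0 _ _ (4 / (w + 2))).
  by rewrite divr_ge0 ?ltW //= ltr_pdivrMr // mul1r; lra.
have delta0 : 0 < (w - 2) / 2 by rewrite divr_gt0 // subr_gt0.
near=> x.
have x0 : 0 <= x by near: x; exact: nbhs_pinfty_ge (num_real _).
have excess0 : 0 <= g x - x by near: x; exact: excess_ge_near.
have gx0 : 0 < g x by apply: lt_le_trans ltr01 _; near: x; exact: tail_ge_near.
have /andP[g2x _] : ((w - (w - 2) / 2) * g x <= g (2 * x) <= (w + (w - 2) / 2) * g x).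
  by near: x; exact: tail_ratio_near.
have {}g2x : (w + 2) / 2 * g x <= g (2 * x) by apply: le_trans g2x; rewrite ler_pM2r //; lra.
have g2x0 : 0 < (w + 2) / 2 * g x by rewrite mulr_gt0 // divr_gt0.
split.
  apply/andP; split; first by rewrite divr_ge0 // ltW.
  by rewrite ler_pdivrMr // mul1r; lra.
apply: (@le_trans _ _ (2 * x / ((w + 2) / 2 * g x))).
  by rewrite ler_wpM2l ?mulr_ge0 // lef_pV2 ?posrE // (lt_le_trans g2x0).
by rewrite le_eqVlt; apply/orP; left; apply/eqP; field; rewrite !gt_eqF.
Unshelve. all: by end_near. Qed.

Lemma excess_ratio_cvg (lam : R) : 0 < lam ->
  (fun x => (g (lam * x) - lam * x) / (g x - x)) @ +oo --> lam `^ alpha.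
Proof.
move=> lam0.
have correction : (fun x => x / g x * (lam `^ alpha - lam)) @ +oo --> 0.
  have [<-|alpha_gt1] := eqVneq 1 alpha.
    by rewrite powRr1 ?ltW // subrr; under eq_fun do rewrite mulr0; exact: cvg_cst.
  rewrite -(mul0r (lam `^ alpha - lam)); apply: cvgM (cvg_cst _).
  by apply: id_div_tail_cvg0; rewrite lt_neqAle alpha_gt1.
have small : (fun x => (g (lam * x) / g x - lam `^ alpha)
    + x / g x * (lam `^ alpha - lam)) @ +oo --> 0.
  rewrite -[0]addr0; apply: cvgD correction.
  by rewrite -(subrr (lam `^ alpha)); apply: cvgB (g_rv lam0) (cvg_cst _).
have [K _ gK] := tail_le_excess.
have bounded : \forall x \near +oo, `|g x / (g x - x)| <= K.
  near=> x.
  have excess0 : 0 < g x - x by apply: lt_le_trans ltr01 _; near: x; exact: excess_ge_near.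
  have gx0 : 0 < g x by apply: lt_le_trans ltr01 _; near: x; exact: tail_ge_near.
  rewrite ger0_norm; last by rewrite divr_ge0 // ltW.
  by rewrite ler_pdivrMr //; near: x; exact: gK.
have lim : (fun x => lam `^ alpha + g x / (g x - x) * ((g (lam * x) / g x - lam `^ alpha)
    + x / g x * (lam `^ alpha - lam))) @ +oo --> lam `^ alpha + 0.
  exact: cvgD (cvg_cst _) (bounded_mul_cvg0 bounded small).
rewrite addr0 in lim; apply: cvg_trans lim; apply: near_eq_cvg; near=> x.
have excess0 : 0 < g x - x by apply: lt_le_trans ltr01 _; near: x; exact: excess_ge_near.
have gx0 : 0 < g x by apply: lt_le_trans ltr01 _; near: x; exact: tail_ge_near.
by rewrite /=; field; rewrite !gt_eqF.
Unshelve. all: by end_near. Qed.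

Lemma regularly_varying_excess : measurable_fun setT g ->
  regularly_varying alpha (fun x => g x - x).
Proof.
move=> mg; split; first by apply: measurable_funB => //; exact: measurable_id.
split; last exact: excess_ratio_cvg.
near=> x; apply: lt_le_trans ltr01 _; near: x; exact: excess_ge_near.
Unshelve. all: by end_near. Qed.

Lemma grid_ratio_near (d : R) (n : nat) : 0 < d ->
  \forall k \near +oo, forall i, (i <= n)%N ->
    (1 + i%:R * d - d) * g k <= g ((1 + i%:R * d) * k).
Proof.
move=> d0.
have : \forall k \near +oo, forall i : 'I_n.+1,
    (1 + i%:R * d - d) * g k <= g ((1 + i%:R * d) * k).
  apply: filter_forall => i.
  have lam1 : 1 <= 1 + i%:R * d by rewrite lerDl mulr_ge0 // ltW.
  near=> k.
  have gk0 : 0 < g k by apply: lt_le_trans ltr01 _; near: k; exact: tail_ge_near.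
  have /andP[lo _] : ((1 + i%:R * d) `^ alpha - d) * g k <= g ((1 + i%:R * d) * k)
      <= ((1 + i%:R * d) `^ alpha + d) * g k.
    by near: k; apply: tail_ratio_near => //; exact: lt_le_trans ltr01 lam1.
  by apply: le_trans lo; rewrite ler_pM2r // lerD2r le1r_powR.
by apply: filterS => k grid i ilen; exact: (grid (Ordinal (ilen : (i < n.+1)%N))).
Unshelve. all: by end_near. Qed.

Section CallBounds.
Context {c : R -> R} {M : R}.
Hypotheses (M0 : 0 <= M)
  (c_ge : forall k b, k < b -> (expR b - expR k) * expR (- g b) <= c k)
  (c_le : forall k t (x : nat -> R) n, x 0%N <= k ->
     c k <= \sum_(i < n) expR (x i.+1) * expR (- g (x i))
            + expR t * expR (- g (x n)) + expR (- eps * t) * M).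

Lemma call_gt0 k : 0 < c k.
Proof.
have k_lt : k < k + 1 by rewrite ltrDl.
apply: lt_le_trans (c_ge k_lt).
by rewrite mulr_gt0 ?expR_gt0 // subr_gt0 ltr_expR.
Qed.

Lemma neg_ln_call_le k b : k + ln 2 <= b -> - ln (c k) <= g b - b + ln 2.
Proof.
move=> kb; have ln2 : 0 < ln (2 : R) by rewrite ln_gt0 // ltr1n.
have half : expR (b - ln 2) <= expR b - expR k.
  have : expR k <= expR (b - ln 2) by rewrite ler_expR; lra.
  rewrite expRB lnK ?posrE // => ?; lra.
rewrite lerNl -ler_expR lnK ?posrE ?call_gt0 //.
apply: le_trans (c_ge (_ : k < b)); last by lra.
have -> : - (g b - b + ln 2) = (b - ln 2) + - g b by ring.
by rewrite expRD ler_wpM2r // ltW // expR_gt0.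
Qed.

Lemma call_le_grid k E (x : nat -> R) n : x 0%N <= k ->
  (forall i, (i < n)%N -> x i.+1 - g (x i) <= E) ->
  - E <= eps / (1 + eps) * g (x n) -> c k <= (n%:R + 1 + M) * expR E.
Proof.
move=> x0k grid far.
(* This [t] makes the two tail terms of [c_le] equal. *)
pose t := g (x n) / (1 + eps).
have eps1 : 1 + eps != 0 by rewrite gt_eqF // addr_gt0.
have tailE : t - g (x n) = - eps * t by rewrite /t; field.
have tE : - eps * t <= E.
  suff -> : - eps * t = - (eps / (1 + eps) * g (x n)) by lra.
  by rewrite /t; field.
apply: le_trans (@c_le k t x n x0k) _; rewrite !mulrDl mul1r (mulrC M).
apply: lerD; [apply: lerD|]; last by rewrite ler_wpM2r // ler_expR.
  apply: (@le_trans _ _ (\sum_(i < n) expR E)).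
    by apply: ler_sum => i _; rewrite -expRD ler_expR grid.
  by rewrite sumr_const card_ord mulr_natl.
by rewrite -expRD ler_expR tailE.
Qed.

Lemma neg_ln_call_upper (eta : R) : 0 < eta ->
  \forall k \near +oo, - ln (c k) <= (1 + eta) * (g k - k).
Proof.
move=> eta0; have [K K1 gK_near] := tail_le_excess.
have K0 : 0 < K := lt_le_trans ltr01 K1.
pose theta := eta / (4 * K).
have theta0 : 0 < theta by rewrite divr_gt0 // mulr_gt0.
pose lam := (1 + theta) `^ alpha^-1.
have lamE : lam `^ alpha = 1 + theta.
  by rewrite -powRrM mulVf ?gt_eqF ?(lt_le_trans ltr01) // powRr1 // addr_ge0 // ltW.
have lam1 : 1 < lam.
  rewrite ltNge; apply/negP => lam_le1.
  have lam01 : 0 < lam <= 1 by rewrite lam_le1 powR_gt0 // addr_gt0.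
  have := ge1r_powR lam01 alpha1.
  rewrite lamE; lra.
have ln2 : 0 < ln (2 : R) by rewrite ln_gt0 // ltr1n.
near=> k.
have k0 : 0 <= k by near: k; exact: nbhs_pinfty_ge (num_real _).
have gk0 : 0 < g k by apply: lt_le_trans ltr01 _; near: k; exact: tail_ge_near.
have gK : g k <= K * (g k - k) by near: k; exact: gK_near.
have excess_big : 2 * ln 2 / eta <= g k - k by near: k; exact: excess_ge_near.
have /andP[_ g_lam] : (lam `^ alpha - theta) * g k <= g (lam * k)
    <= (lam `^ alpha + theta) * g k.
  by near: k; exact: tail_ratio_near (lt_trans ltr01 lam1) theta0.
have shift : k + ln 2 <= lam * k.
  have : ln 2 / (lam - 1) <= k by near: k; exact: nbhs_pinfty_ge (num_real _).
  by rewrite ler_pdivrMr ?subr_gt0 // => ?; lra.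
apply: le_trans (neg_ln_call_le shift) _.
rewrite lamE in g_lam.
have lamk : k <= lam * k by rewrite ler_peMl // ltW.
have thetaK : 2 * theta * g k <= eta / 2 * (g k - k).
  have -> : eta / 2 = 2 * theta * K by rewrite /theta; field; rewrite gt_eqF.
  by rewrite -(mulrA (2 * theta) K) ler_pM2l // mulr_gt0.
move: excess_big; rewrite ler_pdivrMr // => ?; lra.
Unshelve. all: by end_near. Qed.

Lemma neg_ln_call_ge_grid (eta d : R) (n : nat) k :
  0 < eta -> eta <= 1 -> 0 < d -> d <= 1 -> 2 * (1 + eps) <= eps * (n%:R * d) ->
  0 <= k -> 0 < g k -> d * (k + g k) <= eta / 2 * (g k - k) ->
  2 * ln (n%:R + 1 + M) <= (g k - k) * eta ->
  (forall i, (i <= n)%N -> (1 + i%:R * d - d) * g k <= g ((1 + i%:R * d) * k)) ->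
  (1 - eta) * (g k - k) <= - ln (c k).
Proof.
move=> eta0 eta1 d0 d1 nd k0 gk0 dk L_le grid.
have nM : 1 <= n%:R + 1 + M by have := M0; have := ler0n R n; lra.
have nM0 : 0 < n%:R + 1 + M := lt_le_trans ltr01 nM.
have expL : expR (ln (n%:R + 1 + M)) = n%:R + 1 + M by rewrite lnK.
have L0 : 0 <= ln (n%:R + 1 + M) by rewrite ln_ge0.
move: L_le expL L0; move: (ln _) => L L_le expL L0.
have excess0 : 0 <= g k - k by rewrite -(pmulr_lge0 _ eta0); lra.
pose E := - (1 - eta) * (g k - k) - L.
have steps i : (i < n)%N -> (1 + i.+1%:R * d) * k - g ((1 + i%:R * d) * k) <= E.
  move=> ltin; have := grid i (ltnW ltin).
  have : 0 <= i%:R * d * (g k - k) by rewrite mulr_ge0 // mulr_ge0 // ltW.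
  by rewrite -natr1 /E; nra.
have far : - E <= eps / (1 + eps) * g ((1 + n%:R * d) * k).
  have eta_excess : 0 <= eta * (g k - k) by rewrite mulr_ge0 // ltW.
  have : - E <= 2 * g k by rewrite /E; lra.
  move=> /le_trans; apply; rewrite mulrAC ler_pdivlMr ?addr_gt0 //.
  have := grid n (leqnn n); have : 0 <= (1 - d) * g k by rewrite mulr_ge0 ?subr_ge0 // ltW.
  move=> ? ?; have : n%:R * d * g k <= g ((1 + n%:R * d) * k) by lra.
  rewrite -(ler_pM2l eps0) => ?.
  have : 2 * (1 + eps) * g k <= eps * (n%:R * d) * g k by rewrite ler_pM2r.
  lra.
have := @call_le_grid k E (fun i => (1 + i%:R * d) * k) n.
rewrite mul0r addr0 mul1r => /(_ (lexx k) steps far) c_le_exp.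
rewrite lerNr -ler_expR lnK ?posrE ?call_gt0 //; apply: le_trans c_le_exp _.
by rewrite /E expRD expRN expL mulrCA divff ?gt_eqF // mulr1 mulNr.
Qed.

Lemma neg_ln_call_lower (eta : R) : 0 < eta -> eta <= 1 ->
  \forall k \near +oo, (1 - eta) * (g k - k) <= - ln (c k).
Proof.
move=> eta0 eta1; have [K K1 gK_near] := tail_le_excess.
have K0 : 0 < K := lt_le_trans ltr01 K1.
pose d := eta / (4 * K).
have d0 : 0 < d by rewrite divr_gt0 // mulr_gt0.
have d1 : d <= 1 by rewrite /d ler_pdivrMr ?mulr_gt0 //; lra.
have [n nd] : exists n : nat, 2 * (1 + eps) <= eps * (n%:R * d).
  exists (Num.truncn (2 * (1 + eps) / (eps * d))).+1.
  have epsd0 : 0 < eps * d by rewrite mulr_gt0.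
  by rewrite mulrCA -ler_pdivrMr //; apply: ltW; exact: truncnS_gt.
near=> k.
apply: (neg_ln_call_ge_grid eta0 eta1 d0 d1 nd); last by near: k; exact: grid_ratio_near.
- by near: k; exact: nbhs_pinfty_ge (num_real _).
- by apply: lt_le_trans ltr01 _; near: k; exact: tail_ge_near.
- have gK : g k <= K * (g k - k) by near: k; exact: gK_near.
  have excess0 : 0 <= g k - k by near: k; exact: excess_ge_near.
  have -> : eta / 2 * (g k - k) = d * (2 * K * (g k - k)).
    by rewrite /d; field; rewrite gt_eqF.
  by rewrite ler_pM2l //; lra.
- by rewrite -ler_pdivrMr //; near: k; exact: excess_ge_near.
Unshelve. all: by end_near. Qed.

Lemma neg_ln_call_asym_equiv : asym_equiv (fun k => - ln (c k)) (fun k => g k - k).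
Proof.
apply/cvgrPdist_le => e e0; pose eta := Num.min e 1.
have eta0 : 0 < eta by rewrite lt_min e0 ltr01.
have eta1 : eta <= 1 by rewrite ge_min lexx orbT.
have eta_e : eta <= e by rewrite ge_min lexx.
near=> k.
have excess0 : 0 < g k - k by apply: lt_le_trans ltr01 _; near: k; exact: excess_ge_near.
have up : - ln (c k) <= (1 + eta) * (g k - k) by near: k; exact: neg_ln_call_upper.
have lo : (1 - eta) * (g k - k) <= - ln (c k) by near: k; exact: neg_ln_call_lower.
rewrite -(ler_pdivrMr _ _ excess0) in up; rewrite -(ler_pdivlMr _ _ excess0) in lo.
by rewrite ler_norml; apply/andP; split; lra.
Unshelve. all: by end_near. Qed.

Lemma neg_ln_call_regularly_varying : measurable_fun setT g ->
  {homo c : x y /~ x <= y} -> regularly_varying alpha (fun k => - ln (c k)).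
Proof.
move=> mg c_noninc.
apply: regularly_varying_asym_equiv neg_ln_call_asym_equiv (regularly_varying_excess mg).
apply: nondecreasing_measurable => // x y xy.
by rewrite lerN2 ler_ln ?posrE ?call_gt0 // c_noninc.
Qed.

End CallBounds.

End ExponentialTail.

Section GridMajorant.
Context {R : realType}.

Let indic_ge0 (A : set R) y : 0 <= \1_A y :> R.
Proof. by rewrite indicE ler0n. Qed.

Lemma expR_le_grid_sum (x : nat -> R) n y : x 0%N < y -> y <= x n ->
  expR y <= \sum_(i < n) expR (x i.+1) * \1_([set` `]x i, +oo[]) y.
Proof.
move=> x0y; elim: n => [|n IH] yxn; first by move: (lt_le_trans x0y yxn); rewrite ltxx.
rewrite big_ord_recr /=.
have [yxn'|xny] := leP y (x n).
  by apply: le_trans (IH yxn') _; rewrite lerDl mulr_ge0 ?expR_ge0.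
rewrite indicE mem_set /= ?in_itv /= ?andbT // mulr1.
apply: le_trans (_ : expR (x n.+1) <= _); first by rewrite ler_expR.
by rewrite lerDr sumr_ge0 // => i _; rewrite mulr_ge0 ?expR_ge0.
Qed.

Lemma expR_le_grid_majorant (x : nat -> R) n (t eps y : R) : 0 < eps -> x 0%N < y ->
  expR y <= \sum_(i < n) expR (x i.+1) * \1_([set` `]x i, +oo[]) y
    + expR t * \1_([set` `]x n, +oo[]) y + expR (- eps * t) * expR ((1 + eps) * y).
Proof.
move=> eps0 x0y.
have sum0 : 0 <= \sum_(i < n) expR (x i.+1) * \1_([set` `]x i, +oo[]) y.
  by rewrite sumr_ge0 // => i _; rewrite mulr_ge0 ?expR_ge0.
have ind0 : 0 <= expR t * \1_([set` `]x n, +oo[]) y.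
  by rewrite mulr_ge0 ?expR_ge0.
have exp0 : 0 <= expR (- eps * t) * expR ((1 + eps) * y) by rewrite mulr_ge0 ?expR_ge0.
have [yxn|xny] := leP y (x n).
  by apply: le_trans (expR_le_grid_sum x0y yxn) _; rewrite -addrA lerDl addr_ge0.
have [yt|ty] := leP y t.
  rewrite indicE mem_set /= ?in_itv /= ?andbT // mulr1.
  by apply: le_trans (_ : expR t <= _); rewrite ?ler_expR // -addrA addrCA lerDl addr_ge0.
apply: le_trans (_ : expR (- eps * t) * expR ((1 + eps) * y) <= _); last first.
  by rewrite lerDr addr_ge0.
by rewrite -expRD ler_expR; nra.
Qed.

End GridMajorant.

Section CallIntegral.
Context {R : realType} (mu : probability R R).
Local Open Scope ereal_scope.

Let measurable_exp_scaled (D : set R) (a : R) :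
  measurable_fun D (fun y => (expR (a * y))%:E).
Proof.
apply/measurable_EFinP/measurable_funTS/measurableT_comp; first exact: measurable_expR.
exact: measurable_funM (measurable_cst a) (@measurable_id _ _ setT).
Qed.

Lemma integral_indic_le (D A : set R) (v : R) : measurable D -> measurable A ->
  (0 <= v)%R -> \int[mu]_(y in D) (v%:E * (\1_A y : R)%:E) <= v%:E * mu A.
Proof.
move=> mD mA v0.
have ind0 y : D y -> 0 <= (\1_A y : R)%:E by rewrite lee_fin indicE ler0n.
have mind : measurable_fun D (fun y => (\1_A y : R)%:E).
  by apply/measurable_EFinP; exact: measurable_indic.
rewrite (ge0_integralZl_EFin _ mD ind0 mind) // integral_indic // lee_wpmul2l ?lee_fin //.
by apply: le_measure; [rewrite inE; exact: measurableI | rewrite inE | exact: subIsetl].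
Qed.

Lemma call_integral_le_grid (x : nat -> R) n (k t eps : R) : (0 < eps)%R ->
  (x 0%N <= k)%R ->
  \int[mu]_(y in [set` `]k, +oo[]) (expR y - expR k)%:E <=
    \sum_(i < n) (expR (x i.+1))%:E * mu [set` `]x i, +oo[]
    + (expR t)%:E * mu [set` `]x n, +oo[]
    + (expR (- eps * t))%:E * \int[mu]_y (expR ((1 + eps) * y))%:E.
Proof.
move=> eps0 x0k; set D := [set` `]k, +oo[].
have mD : measurable D := measurable_itv _.
pose F i y := (expR (x i.+1))%:E * (\1_([set` `]x i, +oo[]) y)%:E.
pose Ft y := (expR t)%:E * (\1_([set` `]x n, +oo[]) y)%:E.
pose Fe y := (expR (- eps * t))%:E * (expR ((1 + eps) * y))%:E.
have mind z : measurable_fun D (fun y => (\1_([set` `]z, +oo[]) y : R)%:E).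
  by apply/measurable_EFinP; exact: measurable_indic.
have mF i : measurable_fun D (F i) by apply: measurable_funeM.
have mFt : measurable_fun D Ft by apply: measurable_funeM.
have mFe : measurable_fun D Fe.
  by apply: measurable_funeM; exact: measurable_exp_scaled.
have F0 i y : D y -> 0 <= F i y by rewrite /F -EFinM lee_fin mulr_ge0 ?expR_ge0 // indicE ler0n.
have Ft0 y : D y -> 0 <= Ft y by rewrite /Ft -EFinM lee_fin mulr_ge0 ?expR_ge0 // indicE ler0n.
have Fe0 y : D y -> 0 <= Fe y by rewrite /Fe -EFinM lee_fin mulr_ge0 ?expR_ge0.
have sumF0 y : D y -> 0 <= \sum_(i < n) F i y by move=> Dy; apply: sume_ge0 => i _; exact: F0.
apply: (@le_trans _ _ (\int[mu]_(y in D) (\sum_(i < n) F i y + Ft y + Fe y))).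
  apply: ge0_le_integral => //.
  - by move=> y; rewrite /D /= in_itv /= andbT => ky; rewrite lee_fin subr_ge0 ler_expR ltW.
  - apply/measurable_EFinP/measurable_funTS.
    by apply: measurable_funB; [exact: measurable_expR | exact: measurable_cst].
  - by apply: emeasurable_funD => //; apply: emeasurable_funD => //; exact: emeasurable_sum.
  move=> y; rewrite /D /= in_itv /= andbT => ky.
  rewrite /F /Ft /Fe -!EFinM sumEFin -!EFinD lee_fin lerBlDr.
  apply: le_trans (expR_le_grid_majorant n t eps0 (le_lt_trans x0k ky)) _.
  by rewrite lerDl expR_ge0.
rewrite ge0_integralD //; last 2 first.
- by move=> y Dy; rewrite adde_ge0 ?sumF0 ?Ft0.
- by apply: emeasurable_funD => //; exact: emeasurable_sum.
rewrite ge0_integralD //; last exact: emeasurable_sum.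
rewrite ge0_integral_sum //; last by move=> i; exact: F0.
apply: leeD; first apply: leeD.
- by apply: lee_sum => i _; apply: integral_indic_le; rewrite ?expR_ge0.
- by apply: integral_indic_le; rewrite ?expR_ge0.
have exp0 (B : set R) y : B y -> 0 <= (expR ((1 + eps) * y))%:E by rewrite lee_fin expR_ge0.
rewrite (ge0_integralZl_EFin _ mD (exp0 D) (@measurable_exp_scaled D _)) //.
rewrite lee_wpmul2l ?lee_fin ?expR_ge0 //.
exact: ge0_subset_integral (@measurable_exp_scaled _ _) (exp0 _) _.
Qed.

Lemma mul_measure_le_integral (D A : set R) (f : R -> R) (v : R) :
  measurable D -> measurable A -> A `<=` D -> measurable_fun setT f ->
  (forall y, D y -> 0 <= f y)%R -> (forall y, A y -> v <= f y)%R -> (0 <= v)%R ->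
  v%:E * mu A <= \int[mu]_(y in D) (f y)%:E.
Proof.
move=> mD mA AD mf f0 fv v0.
have mfE (B : set R) : measurable_fun B (fun y => (f y)%:E).
  by apply/measurable_EFinP; exact: measurable_funTS.
rewrite -(integral_cst mu mA); apply: (@le_trans _ _ (\int[mu]_(y in A) (f y)%:E)).
  by apply: ge0_le_integral => // y Ay; rewrite lee_fin // (le_trans v0) ?fv.
exact: ge0_subset_integral.
Qed.

End CallIntegral.

Section Survival.
Context {R : realType} (mu : probability R R).

Lemma survivalE (x : R) : 1 - law_cdf mu x = fine (mu [set` `]x, +oo[]).
Proof.
have cover : [set` `]-oo, x]] `|` [set` `]x, +oo[] = setT by rewrite -setCitvl setUCr.
have disj : [set` `]-oo, x]] `&` [set` `]x, +oo[] = set0 by rewrite -setCitvl setICr.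
have := measureU mu (measurable_itv _) (measurable_itv _) disj.
rewrite cover => /(etrans (esym (probability_setT mu)))/(congr1 fine).
rewrite fineD ?fin_num_measure // /law_cdf => /= ->; ring.
Qed.

Lemma survival_nonincreasing : {homo (fun x => 1 - law_cdf mu x) : x y /~ x <= y}.
Proof.
move=> x y xy; rewrite !survivalE fine_le ?fin_num_measure //.
by apply: le_measure; rewrite ?inE // => z /=; rewrite !in_itv /= !andbT; apply: le_lt_trans.
Qed.

Lemma survival_gt0 : (\forall x \near +oo, 0 < - ln (1 - law_cdf mu x)) ->
  forall x, 0 < 1 - law_cdf mu x.
Proof.
move=> [K [_ posK]] x; pose y := Num.max x (K + 1).
have /posK : K < y by rewrite lt_max ltrDl ltr01 orbT.
(* [ln x = 0] for [x <= 0], which would contradict [0 < - ln F̄ y]. *)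
rewrite oppr_gt0 => /ltr0_neq0 lnGy.
apply: lt_le_trans (survival_nonincreasing (_ : x <= y)); last by rewrite le_max lexx.
by rewrite ltNge; apply: contra lnGy => /ln0 ->.
Qed.

End Survival.

Definition exp_moment (R : realType) (mu : probability R R) (a : R) : R :=
  fine (\int[mu]_x (expR (a * x))%:E).

Lemma exp_moment_ge0 (R : realType) (mu : probability R R) (a : R) :
  0 <= exp_moment mu a.
Proof. by rewrite fine_ge0 // integral_ge0 // => x _; rewrite lee_fin expR_ge0. Qed.

Section CallPrice.
Context {R : realType} (mu : probability R R) {eps : R}.
Hypotheses (eps0 : 0 < eps)
  (moment : (\int[mu]_x (expR ((1 + eps) * x))%:E < +oo)%E).

Let momentE : (\int[mu]_x (expR ((1 + eps) * x))%:E)%E = (exp_moment mu (1 + eps))%:E.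
Proof.
rewrite fineK // ge0_fin_numE //.
by apply: integral_ge0 => x _; rewrite lee_fin expR_ge0.
Qed.

Let call_integral_ge0 k :
  (0 <= \int[mu]_(x in [set` `]k, +oo[]) (expR x - expR k)%:E)%E.
Proof.
apply: integral_ge0 => x; rewrite /= in_itv /= andbT => kx.
by rewrite lee_fin subr_ge0 ler_expR ltW.
Qed.

Let muE y : mu [set` `]y, +oo[] = (1 - law_cdf mu y)%:E.
Proof. by rewrite survivalE fineK ?fin_num_measure. Qed.

Lemma call_integral_fin_num k :
  (\int[mu]_(x in [set` `]k, +oo[]) (expR x - expR k)%:E)%E \is a fin_num.
Proof.
rewrite ge0_fin_numE ?call_integral_ge0 //.
have := call_integral_le_grid mu 0 0 eps0 (lexx k).
rewrite big_ord0 add0e momentE muE -!EFinM -EFinD => /le_lt_trans; apply.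
exact: ltry.
Qed.

Lemma call_price_ge k b : k < b ->
  (expR b - expR k) * (1 - law_cdf mu b) <= call_price mu k.
Proof.
move=> kb; rewrite /call_price -[X in X <= _]/(fine (_ : R)%:E).
apply: fine_le; rewrite ?call_integral_fin_num // EFinM -muE.
apply: mul_measure_le_integral; rewrite ?subr_ge0 ?ler_expR ?ltW //.
- by move=> z /=; rewrite !in_itv /= !andbT; exact: lt_trans.
- by apply: measurable_funB => //; exact: measurable_expR.
- by move=> z /=; rewrite in_itv /= andbT => kz; rewrite subr_ge0 ler_expR ltW.
- by move=> z /=; rewrite in_itv /= andbT => bz; rewrite lerD2r ler_expR ltW.
Qed.

Lemma call_price_nonincreasing : {homo call_price mu : x y /~ x <= y}.
Proof.
move=> x y yx; apply: fine_le; rewrite ?call_integral_fin_num //.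
have mexpB (A : set R) (z : R) : measurable_fun A (fun y => (expR y - expR z)%:E).
  by apply/measurable_EFinP/measurable_funTS/measurable_funB => //; exact: measurable_expR.
apply: (@le_trans _ _ (\int[mu]_(z in [set` `]x, +oo[]) (expR z - expR y)%:E)%E).
  apply: ge0_le_integral; rewrite ?mexpB //.
  - by move=> z /=; rewrite in_itv /= andbT => xz; rewrite lee_fin subr_ge0 ler_expR ltW.
  - by move=> z _; rewrite lee_fin lerD2l lerN2 ler_expR.
apply: ge0_subset_integral; rewrite ?mexpB //.
- by move=> z /=; rewrite in_itv /= andbT => yz; rewrite lee_fin subr_ge0 ler_expR ltW.
- by move=> z /=; rewrite !in_itv /= !andbT; exact: le_lt_trans.
Qed.

Lemma neg_ln_survival_ge x : 0 < 1 - law_cdf mu x ->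
  (1 + eps) * x - ln (exp_moment mu (1 + eps)) <= - ln (1 - law_cdf mu x).
Proof.
move=> G0.
have : expR ((1 + eps) * x) * (1 - law_cdf mu x) <= exp_moment mu (1 + eps).
  rewrite -lee_fin -momentE EFinM -muE.
  apply: mul_measure_le_integral; rewrite ?expR_ge0 //.
  - by apply: measurableT_comp; [exact: measurable_expR | exact: measurable_funM].
  - move=> z /=; rewrite in_itv /= andbT => xz.
    by rewrite ler_expR ler_pM2l ?ltW // addr_gt0.
move=> le_M; have M0 : 0 < exp_moment mu (1 + eps).
  by apply: lt_le_trans le_M; rewrite mulr_gt0 ?expR_gt0.
move: le_M; rewrite -ler_ln ?posrE ?mulr_gt0 ?expR_gt0 // lnM ?posrE ?expR_gt0 // expRK.
lra.
Qed.

Lemma call_price_le_grid (x : nat -> R) n k t : x 0%N <= k ->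
  call_price mu k <= \sum_(i < n) expR (x i.+1) * (1 - law_cdf mu (x i))
    + expR t * (1 - law_cdf mu (x n)) + expR (- eps * t) * exp_moment mu (1 + eps).
Proof.
move=> x0k; have := call_integral_le_grid mu n t eps0 x0k.
under eq_bigr do rewrite muE -EFinM.
rewrite muE momentE sumEFin -!EFinM -!EFinD => le_int.
rewrite /call_price -[X in _ <= X]/(fine (_ : R)%:E).
by apply: fine_le; rewrite ?call_integral_fin_num.
Qed.

End CallPrice.

Theorem lemma2 (R : realType) (mu : probability R R) (alpha : R) :
  (exists2 eps : R, 0 < eps &
     (\int[mu]_x (expR ((1 + eps) * x))%:E < +oo)%E) ->
  1 <= alpha ->
  regularly_varying alpha (fun x => - ln (1 - law_cdf mu x)) ->
  regularly_varying alpha (fun k => - ln (call_price mu k)) /\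
  asym_equiv (fun k => - ln (call_price mu k))
             (fun k => - k - ln (1 - law_cdf mu k)).
Proof.
move=> [eps eps0 moment] alpha1 [mg [g_pos g_rv]].
have G0 := survival_gt0 g_pos.
have g_ge := neg_ln_survival_ge eps0 moment.
have c_ge := call_price_ge eps0 moment.
have c_le := call_price_le_grid eps0 moment.
pose g x := - ln (1 - law_cdf mu x).
have expg x : expR (- g x) = 1 - law_cdf mu x by rewrite /g opprK lnK // posrE G0.
have tail x : (1 + eps) * x - ln (exp_moment mu (1 + eps)) <= g x by exact: g_ge (G0 x).
have lower k b : k < b -> (expR b - expR k) * expR (- g b) <= call_price mu k.
  by rewrite expg; exact: c_ge.
have upper k t (x : nat -> R) n : x 0%N <= k -> call_price mu k <=
    \sum_(i < n) expR (x i.+1) * expR (- g (x i)) + expR t * expR (- g (x n))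
    + expR (- eps * t) * exp_moment mu (1 + eps).
  by under eq_bigr do rewrite expg; rewrite expg; exact: c_le.
have M0 := exp_moment_ge0 mu (1 + eps).
have rv := neg_ln_call_regularly_varying eps0 tail alpha1 g_rv M0 lower upper mg
  (call_price_nonincreasing eps0 moment).
have equiv := neg_ln_call_asym_equiv eps0 tail alpha1 g_rv M0 lower upper.
split => //.
have -> : (fun k => - k - ln (1 - law_cdf mu k)) = (fun k => g k - k).
  by apply/funext => k; rewrite /g addrC.
exact: equiv.
Qed.
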